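(* Let $S \geq 1$ and, for $i = 1,\dots,S$, let $\boldsymbol{M}_i \in \mathbb{R}^{m_i \times m_i}$ be symmetric positive definite, let $\boldsymbol{K}_i \in \mathbb{R}^{m_i \times m_i}$ be symmetric positive semidefinite, and let $\boldsymbol{C}_i \in \mathbb{R}^{p \times m_i}$ be signed Boolean matrices such that the block matrix $[\boldsymbol{C}_1 \ \cdots \ \boldsymbol{C}_S]$ has full row rank $p$. Let $\Delta t > 0$ and $1/2 < \gamma \leq 1$. Suppose that sequences $\boldsymbol{d}_i^{(n)}, \boldsymbol{v}_i^{(n)} \in \mathbb{R}^{m_i}$ ($i=1,\dots,S$) and $\boldsymbol{\lambda}^{(n)} \in \mathbb{R}^p$, $n = 0,1,2,\dots$, satisfy (the $\boldsymbol{d}$-continuity domain decomposition method with zero external forcing): for all $n \geq 0$ and all $i$: $\boldsymbol{M}_i \boldsymbol{v}_i^{(n)} + \boldsymbol{K}_i \boldsymbol{d}_i^{(n)} = \boldsymbol{C}_i^{\mathrm{T}} \boldsymbol{\lambda}^{(n)}$ and $\sum_{i=1}^S \boldsymbol{C}_i \boldsymbol{d}_i^{(n)} = \boldsymbol{0}$; for all $n \geq 1$ and all $i$: $\boldsymbol{d}_i^{(n)} = \boldsymbol{d}_i^{(n-1)} + \Delta t\left((1-\gamma)\boldsymbol{v}_i^{(n-1)} + \gamma \boldsymbol{v}_i^{(n)}\right)$. Then the sequences $(\boldsymbol{d}_i^{(n)})_{n\ge0}$, $(\boldsymbol{v}_i^{(n)})_{n\ge0}$ ($i=1,\dots,S$)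 and $(\boldsymbol{\lambda}^{(n)})_{n\ge0}$ are all bounded.
   Context: A signed Boolean matrix is a matrix whose entries are in $\{-1,0,+1\}$ and each of whose rows has at most one nonzero entry. A sequence of vectors is bounded if there is a constant $C$ independent of $n$ with $\|\boldsymbol{x}^{(n)}\| < C$ for all $n$ (any norm). The equations model a first-order transient system (e.g. semi-discrete heat conduction) decomposed into $S$ subdomains coupled by Lagrange multipliers $\boldsymbol{\lambda}$, integrated in time with the generalized trapezoidal rule with parameter $\gamma$ and time step $\Delta t$. *)

From HB Require Import structures.
From mathcomp Require Import all_boot all_order all_algebra.
From mathcomp Require Import reals.
Set Implicit Arguments. Unset Strict Implicit. Unset Printing Implicit Defensive.
Import Order.TTheory GRing.Theory Num.Theory.
Local Open Scope ring_scope.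

Definition symmetric_mx {R : realType} {n : nat} (A : 'M[R]_n) : Prop := A^T = A.

Definition pos_def {R : realType} {n : nat} (A : 'M[R]_n) : Prop :=
  symmetric_mx A /\ forall x : 'cV[R]_n, x != 0 -> 0 < (x^T *m A *m x) 0 0.

Definition pos_semidef {R : realType} {n : nat} (A : 'M[R]_n) : Prop :=
  symmetric_mx A /\ forall x : 'cV[R]_n, 0 <= (x^T *m A *m x) 0 0.

Definition signed_boolean {R : realType} {p m : nat} (C : 'M[R]_(p, m)) : Prop :=
  (forall r j, C r j = 0 \/ C r j = 1 \/ C r j = -1) /\
  (forall r j1 j2, C r j1 != 0 -> C r j2 != 0 -> j1 = j2).

(* bounded sequence of vectors (max-entry norm; all norms equivalent) *)
Definition bounded_seq {R : realType} {n : nat} (x : nat -> 'cV[R]_n) : Prop :=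
  exists c : R, forall k (j : 'I_n), `|x k j 0| < c.

From HB Require Import structures.
From mathcomp Require Import all_boot all_order all_algebra.
From mathcomp Require Import reals.
From mathcomp Require Import ring lra.
Set Implicit Arguments. Unset Strict Implicit. Unset Printing Implicit Defensive.
Import Order.TTheory GRing.Theory Num.Theory.
Local Open Scope ring_scope.

(* Energy method.  With [e_i] the [gamma]-weighted mid-point of [d_i^(n)] and
   [d_i^(n+1)], one time step changes [sum_i d_i^T M_i d_i] by
   [2 dt sum_i e_i^T (C_i^T mu - K_i e_i) - (2 gamma - 1) dt^2 sum_i w_i^T M_i w_i];
   the coupling term vanishes because [sum_i C_i e_i = 0], so for [gamma >= 1/2]
   this energy is nonincreasing and the displacements are bounded.  The scheme is
   linear and autonomous, so the increments [d^(n+1) - d^(n)] are bounded as well,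
   and the trapezoidal relation then expresses [v^(n+1)] as a bounded term plus
   [-(1 - gamma)/gamma v^(n)], a contraction for [gamma > 1/2].  Finally
   [C_i^T lambda = M_i v_i + K_i d_i] is bounded, and [lambda] is recovered from it
   through a right inverse of the full-row-rank matrix [[C_1 ... C_S]]. *)

Section BoundedSequences.
Variable R : realFieldType.

Definition bounded_rseq (u : nat -> R) : Prop := exists c, forall n, `|u n| <= c.

Lemma bounded_rseq_ext (u w : nat -> R) :
  (forall n, u n = w n) -> bounded_rseq u -> bounded_rseq w.
Proof. by move=> e [c hc]; exists c => n; rewrite -e. Qed.

Lemma bounded_rseqD (u w : nat -> R) :
  bounded_rseq u -> bounded_rseq w -> bounded_rseq (fun n => u n + w n).
Proof.
move=> [a ha] [b hb]; exists (a + b) => n.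
by apply: le_trans (ler_normD _ _) _; apply: lerD.
Qed.

Lemma bounded_rseqZ (k : R) (u : nat -> R) :
  bounded_rseq u -> bounded_rseq (fun n => k * u n).
Proof. by move=> [a ha]; exists (`|k| * a) => n; rewrite normrM ler_wpM2l. Qed.

Lemma bounded_rseq_norm (u : nat -> R) :
  bounded_rseq u -> bounded_rseq (fun n => `|u n|).
Proof. by move=> [c hc]; exists c => n; rewrite normr_id. Qed.

Lemma bounded_rseq_sum (I : Type) (r : seq I) (u : I -> nat -> R) :
  (forall i, bounded_rseq (u i)) -> bounded_rseq (fun n => \sum_(i <- r) u i n).
Proof.
move=> hu; elim: r => [|a r IH]; first by exists 0 => n; rewrite big_nil normr0.
by apply: bounded_rseq_ext (bounded_rseqD (hu a) IH) => n; rewrite big_cons.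
Qed.

Lemma bounded_rseq_sqr_le (u : nat -> R) (c : R) :
  (forall n, u n ^+ 2 <= c) -> bounded_rseq u.
Proof.
move=> hu; exists (1 + c) => n.
have c0 : 0 <= c by apply: le_trans (hu n); exact: sqr_ge0.
have [le1|gt1] := leP `|u n| 1; first by apply: le_trans le1 _; rewrite lerDl.
apply: le_trans (_ : u n ^+ 2 <= 1 + c); last by apply: le_trans (hu n) _; rewrite lerDr.
by rewrite -real_normK ?num_real // expr2 ler_peMr // ltW.
Qed.

Lemma bounded_affine_recurrence (u f : nat -> R) (r : R) :
  `|r| < 1 -> bounded_rseq f -> (forall n, u n.+1 = f n + r * u n) -> bounded_rseq u.
Proof.
move=> hr [c hc] hu.
have c0 : 0 <= c by apply: le_trans (hc 0%N).
have r1 : 0 < 1 - `|r| by rewrite subr_gt0.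
exists (`|u 0%N| + c / (1 - `|r|)); elim=> [|n IH]; first by rewrite lerDl divr_ge0 // ltW.
rewrite hu; apply: le_trans (ler_normD _ _) _; rewrite normrM.
have ru : `|r| * `|u n| <= `|r| * (`|u 0%N| + c / (1 - `|r|)) by rewrite ler_wpM2l.
apply: le_trans (lerD (hc n) ru) _.
set t := c / (1 - `|r|).
(* [t] is the fixed point of [s |-> c + |r| s] *)
have ht : t = c + `|r| * t by rewrite /t; field; rewrite gt_eqF.
have : `|r| * `|u 0%N| <= `|u 0%N| by rewrite ler_piMl // ltW.
rewrite mulrDr; lra.
Qed.

Lemma bounded_rseq_row_free p q (A : 'M[R]_(p, q)) (x : nat -> 'rV[R]_p) :
  row_free A -> (forall k, bounded_rseq (fun n => (x n *m A) 0 k)) ->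
  forall j, bounded_rseq (fun n => x n 0 j).
Proof.
move=> /row_freeP [B hB] hx j.
apply: (@bounded_rseq_ext (fun n => \sum_k (x n *m A) 0 k * B k j)).
  by move=> n; rewrite -[in RHS](mulmx1 (x n)) -hB mulmxA [RHS]mxE.
apply: bounded_rseq_sum => k.
apply: bounded_rseq_ext (bounded_rseqZ (B k j) (hx k)) => n; exact: mulrC.
Qed.

End BoundedSequences.

Lemma bounded_seq_entries (R : realType) n (x : nat -> 'cV[R]_n) :
  (forall j, bounded_rseq (fun k => x k j 0)) -> bounded_seq x.
Proof.
move=> hx.
have [c hc] : bounded_rseq (fun k => \sum_j `|x k j 0|).
  apply: bounded_rseq_sum => j.
  exact: bounded_rseq_norm.
exists (c + 1) => k j; apply: (@le_lt_trans _ _ c); last by rewrite ltrDl.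
apply: le_trans (hc k); rewrite [X in _ <= X]ger0_norm ?sumr_ge0 //.
by rewrite (bigD1 j) //= lerDl sumr_ge0.
Qed.

Section BilinearForm.
Variables (R : comRingType) (n : nat).
Implicit Types (A : 'M[R]_n) (x y z : 'cV[R]_n).

Definition mxform A x y : R := (x^T *m A *m y) 0 0.

Lemma mxformDl A x y z : mxform A (x + y) z = mxform A x z + mxform A y z.
Proof. by rewrite /mxform linearD /= !mulmxDl mxE. Qed.

Lemma mxformDr A x y z : mxform A z (x + y) = mxform A z x + mxform A z y.
Proof. by rewrite /mxform mulmxDr mxE. Qed.

Lemma mxformZl A a x y : mxform A (a *: x) y = a * mxform A x y.
Proof. by rewrite /mxform linearZ /= -!scalemxAl mxE. Qed.

Lemma mxformZr A a x y : mxform A x (a *: y) = a * mxform A x y.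
Proof. by rewrite /mxform -!scalemxAr mxE. Qed.

Lemma mxformC A x y : A^T = A -> mxform A x y = mxform A y x.
Proof.
move=> hA; rewrite /mxform.
have -> : (x^T *m A *m y) 0 0 = ((x^T *m A *m y)^T) 0 0 by rewrite [RHS]mxE.
by rewrite !trmx_mul trmxK hA mulmxA.
Qed.

Lemma mxform_trapezoid A a h g : A^T = A ->
  mxform A (a + h) (a + h) =
  mxform A a a + 2 * mxform A (a + g *: h) h - (2 * g - 1) * mxform A h h.
Proof.
move=> hA; rewrite !mxformDl !mxformDr mxformZl (mxformC h a hA); ring.
Qed.

End BilinearForm.

Section PositiveDefinite.
Variables (R : realType) (n : nat).
Implicit Types (A B : 'M[R]_n) (x y : 'cV[R]_n).

Lemma mxform_pd_ge0 A x : pos_def A -> 0 <= mxform A x x.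
Proof.
move=> [_ hA]; have [->|x0] := eqVneq x 0; last exact/ltW/hA.
by rewrite /mxform mulmx0 mxE.
Qed.

Lemma mxform_Cauchy_Schwarz A x y :
  pos_def A -> mxform A x y ^+ 2 <= mxform A x x * mxform A y y.
Proof.
move=> hA; have [->|y0] := eqVneq y 0.
  by rewrite /mxform !mulmx0 !mxE mulr0 expr0n.
have yy0 : 0 < mxform A y y by exact: hA.2.
set b := mxform A x y; set a := mxform A x x; set c := mxform A y y.
have := mxform_pd_ge0 (x + (- b / c) *: y) hA.
rewrite !mxformDl !mxformDr !mxformZl !mxformZr (mxformC y x hA.1) -/a -/b -/c.
have -> : a + - b / c * b + (- b / c * b + - b / c * (- b / c * c)) = a - b ^+ 2 / c.
  by field; rewrite gt_eqF.
by rewrite subr_ge0 ler_pdivrMr.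
Qed.

Lemma pd_unitmx A : pos_def A -> A \in unitmx.
Proof.
move=> [_ hA]; rewrite unitmxE unitfE; apply/negP => /det0P [w w0 hw].
have := hA w^T; rewrite trmx_eq0 => /(_ w0).
by rewrite trmxK hw mul0mx mxE ltxx.
Qed.

(* [x_j = y^T A x] for [y = A^-1 e_j], then Cauchy-Schwarz. *)
Lemma pd_coord_sqr_le A (j : 'I_n) : pos_def A ->
  exists2 c, 0 <= c & forall x, x j 0 ^+ 2 <= c * mxform A x x.
Proof.
move=> hA; pose y : 'cV[R]_n := invmx A *m delta_mx j 0.
exists (mxform A y y) => [|x]; first exact: mxform_pd_ge0.
suff -> : x j 0 = mxform A y x by exact: mxform_Cauchy_Schwarz.
rewrite /mxform /y trmx_mul trmx_inv hA.1 trmx_delta.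
by rewrite -(mulmxA _ (invmx A)) mulVmx ?pd_unitmx // mulmx1 -rowE mxE.
Qed.

(* From [mxform_trapezoid]; the dropped term [(2 g - 1) (dt w)^T A (dt w)] is
   where [1/2 <= g] is needed. *)
Lemma trapezoid_energy_step A B (a w f : 'cV[R]_n) (dt g : R) :
  pos_def A -> pos_semidef B -> 0 <= dt -> 1 / 2 <= g ->
  A *m w + B *m (a + (g * dt) *: w) = f ->
  mxform A (a + dt *: w) (a + dt *: w) <=
    mxform A a a + 2 * dt * ((a + (g * dt) *: w)^T *m f) 0 0.
Proof.
move=> hA hB dt0 hg hf; set e := a + (g * dt) *: w.
have eh : e = a + g *: (dt *: w) by rewrite /e scalerA.
have ew : mxform A e w = (e^T *m f) 0 0 - mxform B e e.
  by rewrite /mxform -!mulmxA -hf mulmxDr [in RHS]mxE addrK.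
rewrite (mxform_trapezoid _ _ g hA.1) -eh mxformZr ew.
have hBe : 0 <= dt * mxform B e e by rewrite mulr_ge0 //; exact: hB.2.
have hAh : 0 <= (2 * g - 1) * mxform A (dt *: w) (dt *: w).
  by rewrite mulr_ge0 ?mxform_pd_ge0 //; lra.
lra.
Qed.

End PositiveDefinite.

Section DContinuityScheme.
Variables (R : realType) (S p : nat) (m : 'I_S -> nat).
Variables (M K : forall i, 'M[R]_(m i)) (C : forall i, 'M[R]_(p, m i)).
Variables (dt gamma : R).
Implicit Types (d v : forall i, nat -> 'cV[R]_(m i)) (lam : nat -> 'cV[R]_p).

Definition dcontinuity_solution d v lam : Prop :=
  [/\ forall n i, M i *m v i n + K i *m d i n = (C i)^T *m lam n,
      forall n, \sum_i C i *m d i n = 0 &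
      forall n i, d i n.+1 = d i n + dt *: ((1 - gamma) *: v i n + gamma *: v i n.+1)].

Definition forward_diff k (x : nat -> 'cV[R]_k) n := x n.+1 - x n.

Lemma dcontinuity_solution_diff d v lam : dcontinuity_solution d v lam ->
  dcontinuity_solution (fun i => forward_diff (d i)) (fun i => forward_diff (v i))
    (forward_diff lam).
Proof.
rewrite /forward_diff => -[eq_force eq_constr eq_step]; split=> [n i|n|n i].
- by rewrite !mulmxBr -!eq_force opprD addrACA.
- by under eq_bigr do rewrite mulmxBr; rewrite sumrB !eq_constr subr0.
- rewrite (eq_step n.+1 i) (eq_step n i).
  by apply/matrixP => a b; rewrite !mxE; ring.
Qed.

Definition energy d n := \sum_i mxform (M i) (d i n) (d i n).

Hypotheses (posM : forall i, pos_def (M i)) (psdK : forall i, pos_semidef (K i)).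
Hypotheses (dt_ge0 : 0 <= dt) (gamma_ge : 1 / 2 <= gamma).

(* The multipliers' work on the subdomains cancels in the sum by the constraint. *)
Lemma energy_nonincreasing d v lam : dcontinuity_solution d v lam ->
  forall n, energy d n.+1 <= energy d n.
Proof.
move=> [eq_force eq_constr eq_step] n.
pose mu := (1 - gamma) *: lam n + gamma *: lam n.+1.
pose w i := (1 - gamma) *: v i n + gamma *: v i n.+1.
pose e i := d i n + (gamma * dt) *: w i.
have e_mid i : e i = (1 - gamma) *: d i n + gamma *: d i n.+1.
  by rewrite /e eq_step; apply/matrixP => a b; rewrite !mxE; ring.
have step i : mxform (M i) (d i n.+1) (d i n.+1) <=
    mxform (M i) (d i n) (d i n) + 2 * dt * ((e i)^T *m ((C i)^T *m mu)) 0 0.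
  rewrite eq_step; apply: trapezoid_energy_step => //.
  rewrite -/(e i) e_mid /w /mu !mulmxDr -!scalemxAr.
  by rewrite addrACA -!scalerDr !eq_force.
have work0 : \sum_i ((e i)^T *m ((C i)^T *m mu)) 0 0 = 0.
  under eq_bigr do rewrite mulmxA -trmx_mul.
  rewrite -summxE -mulmx_suml -linear_sum /=.
  under eq_bigr do rewrite e_mid mulmxDr -!scalemxAr.
  by rewrite big_split /= -!scaler_sumr !eq_constr !scaler0 addr0 trmx0 mul0mx mxE.
apply: le_trans (ler_sum _ (fun i _ => step i)) _.
by rewrite big_split /= -mulr_sumr work0 mulr0 addr0.
Qed.

Lemma solution_disp_bounded d v lam : dcontinuity_solution d v lam ->
  forall i j, bounded_rseq (fun n => d i n j 0).
Proof.
move=> sol i j.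
have energy_le n : energy d n <= energy d 0.
  by elim: n => [//|n IH]; apply: le_trans (energy_nonincreasing sol n) IH.
have [c c0 hc] := pd_coord_sqr_le j (posM i).
apply: (@bounded_rseq_sqr_le _ _ (c * energy d 0)) => n.
apply: le_trans (hc (d i n)) _; rewrite ler_wpM2l //.
apply: le_trans (energy_le n); rewrite /energy (bigD1 i) //= lerDl.
by apply: sumr_ge0 => k _; exact: mxform_pd_ge0.
Qed.

End DContinuityScheme.

Section DContinuityBounds.
Variables (R : realType) (S p : nat) (m : 'I_S -> nat).
Variables (M K : forall i, 'M[R]_(m i)) (C : forall i, 'M[R]_(p, m i)).
Variables (dt gamma : R).
Variables (d v : forall i, nat -> 'cV[R]_(m i)) (lam : nat -> 'cV[R]_p).
Hypothesis sol : dcontinuity_solution M K C dt gamma d v lam.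

(* [v_{n+1} = (d_{n+1} - d_n) / (gamma dt) - (1 - gamma) / gamma v_n], and the
   increments of [d] solve the same scheme. *)
Lemma solution_vel_bounded :
  (forall i, pos_def (M i)) -> (forall i, pos_semidef (K i)) -> 0 < dt -> 1 / 2 < gamma ->
  forall i j, bounded_rseq (fun n => v i n j 0).
Proof.
move=> posM psdK dt_gt0 gamma_gt i j.
have diff_bounded := solution_disp_bounded posM psdK (ltW dt_gt0) (ltW gamma_gt)
  (dcontinuity_solution_diff sol) j.
have [_ _ eq_step] := sol.
apply: (bounded_affine_recurrence (f := fun n => (dt * gamma)^-1 * forward_diff (d i) n j 0)
  (r := - ((1 - gamma) / gamma))).
- have gamma_gt0 : 0 < gamma by lra.
  rewrite normrN normf_div (gtr0_norm gamma_gt0) ltr_pdivrMr // mul1r ltr_norml.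
  apply/andP; split; lra.
- exact: bounded_rseqZ.
- move=> n; rewrite /forward_diff eq_step !mxE; field.
  by rewrite !gt_eqF //; lra.
Qed.

Lemma solution_mult_bounded : row_free (mxrow C) ->
  (forall i j, bounded_rseq (fun n => d i n j 0)) ->
  (forall i j, bounded_rseq (fun n => v i n j 0)) ->
  forall r, bounded_rseq (fun n => lam n r 0).
Proof.
move=> freeC bd bv r; have [eq_force _ _] := sol.
suff /(_ r) : forall r, bounded_rseq (fun n => (lam n)^T 0 r).
  by apply: bounded_rseq_ext => n; rewrite mxE.
apply: (bounded_rseq_row_free freeC) => k.
set i := tagnat.sig1 k; set j := tagnat.sig2 k.
apply: (@bounded_rseq_ext _ (fun n => \sum_l M i j l * v i n l 0 + \sum_l K i j l * d i n l 0)).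
  move=> n; rewrite mul_mxrow mxE -/i -/j -[C i]trmxK -trmx_mul mxE -eq_force.
  by rewrite !mxE.
by apply: bounded_rseqD; apply: bounded_rseq_sum => l; apply: bounded_rseqZ.
Qed.

End DContinuityBounds.

Theorem mainTheorem2 (R : realType) (S p : nat) (m : 'I_S -> nat)
  (M K : forall i : 'I_S, 'M[R]_(m i)) (C : forall i : 'I_S, 'M[R]_(p, m i))
  (dt gamma : R)
  (d v : forall i : 'I_S, nat -> 'cV[R]_(m i)) (lam : nat -> 'cV[R]_p) :
  (1 <= S)%N ->
  (forall i, pos_def (M i)) ->
  (forall i, pos_semidef (K i)) ->
  (forall i, signed_boolean (C i)) ->
  \rank (mxrow C) = p ->
  0 < dt -> 1 / 2 < gamma -> gamma <= 1 ->
  (forall n i, M i *m v i n + K i *m d i n = (C i)^T *m lam n) ->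
  (forall n, \sum_(i < S) C i *m d i n = 0) ->
  (forall n i, d i n.+1 = d i n + dt *: ((1 - gamma) *: v i n + gamma *: v i n.+1)) ->
  (forall i, bounded_seq (d i)) /\ (forall i, bounded_seq (v i)) /\ bounded_seq lam.
Proof.
move=> _ posM psdK _ rankC dt_gt0 gamma_gt _ eq_force eq_constr eq_step.
have sol : dcontinuity_solution M K C dt gamma d v lam by split.
have bd := solution_disp_bounded posM psdK (ltW dt_gt0) (ltW gamma_gt) sol.
have bv := solution_vel_bounded sol posM psdK dt_gt0 gamma_gt.
have freeC : row_free (mxrow C) by rewrite /row_free rankC.
have bl := solution_mult_bounded sol freeC bd bv.
by split; [|split]; [move=> i..|]; apply: bounded_seq_entries.
Qed.
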